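(* Let $k$ be algebraically closed of characteristic $0$ and $n,m\ge0$. Let $\mathfrak M_{n,m}$ be the set of $n\times m$ matrices over $\mathbf F$, and consider $k[\mathfrak M_{n,m}]$ (the vector space with basis $[X]$, $X\in\mathfrak M_{n,m}$) with the left $k[\mathfrak M_n]$-action $[a][X]=[aX]$ and the commuting right $k[\mathfrak M_m]$-action $[X][b]=[Xb]$. Then the images of $k[\mathfrak M_n]$ and of $k[\mathfrak M_m]$ in $\operatorname{End}_k(k[\mathfrak M_{n,m}])$ are each other's centralizers.
   Context: $\mathbf F$ is a finite field with $q$ elements and $\mathfrak M_n$ denotes the monoid of $n\times n$ matrices over $\mathbf F$ with monoid algebra $k[\mathfrak M_n]$. Note $k[\mathfrak M_{n,m}]\cong V^{\otimes m}$ for $V=k[\mathbf F^n]$. *)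

From HB Require Import structures.
From mathcomp Require Import all_boot all_order all_algebra all_field.
Set Implicit Arguments. Unset Strict Implicit. Unset Printing Implicit Defensive.
Import GRing.Theory.
Local Open Scope ring_scope.

(* The monoid algebra k[S] of a finite set S is represented as functions
   S -> k (an element sum_s c_s [s] is the function s |-> c_s).
   V := k[M_{n,m}] = {ffun 'M[F]_(n,m) -> k}. *)

Definition lact (F : finFieldType) (k : fieldType) (n m : nat)
  (f : {ffun 'M[F]_n -> k}) (v : {ffun 'M[F]_(n,m) -> k^o}) : {ffun 'M[F]_(n,m) -> k^o} :=
  [ffun Y => \sum_(a : 'M[F]_n) \sum_(X : 'M[F]_(n,m) | a *m X == Y) f a * v X].

Definition ract (F : finFieldType) (k : fieldType) (n m : nat)
  (v : {ffun 'M[F]_(n,m) -> k^o}) (g : {ffun 'M[F]_m -> k}) : {ffun 'M[F]_(n,m) -> k^o} :=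
  [ffun Y => \sum_(X : 'M[F]_(n,m)) \sum_(b : 'M[F]_m | X *m b == Y) v X * g b].

From HB Require Import structures.
From mathcomp Require Import all_boot all_order all_algebra all_field.
Import GRing.Theory.
Local Open Scope ring_scope.
Set Implicit Arguments. Unset Strict Implicit. Unset Printing Implicit Defensive.

(* Fix a nontrivial additive character [psi] of [F] (it exists because [k] is
   algebraically closed of characteristic 0) and Fourier-transform functions on
   matrices through the trace pairing [tr (X Z^T)].  If [T] commutes with the
   right action, the transform [Om X eta] of [T [X]] at [eta] satisfies
   [Om (X b) eta = Om X (eta b^T)].  Such a balanced function depends only on
   [eta X^T], say [Om X eta = G (eta X^T)]; if [f] is the inverse transform of
   [G] then [T [X]] and [f . [X]] have the same transform, so [T] is the left
   action of [f].  The other centralizer is obtained by transposing, and the two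
   actions commute by associativity of the matrix product. *)

Lemma nontrivial_root_of_unity (k : closedFieldType) (p : nat) :
  [pchar k] =i pred0 -> (1 < p)%N -> exists2 z : k, z ^+ p = 1 & z != 1.
Proof.
move=> k_char0 p_gt1; pose P := \poly_(i < p) (1 : k).
have szP : size P = p by rewrite size_poly_eq // oner_neq0.
have /closed_rootP [z /rootP Pz] : size P != 1%N by rewrite szP gtn_eqF.
have sum_z : \sum_(i < p) z ^+ i = 0.
  by rewrite -[RHS]Pz horner_poly; apply: eq_bigr => i _; rewrite mul1r.
exists z; first by apply/eqP; rewrite -subr_eq0 subrX1 sum_z mulr0.
apply: contra_eq_neq sum_z => ->; under eq_bigr do rewrite expr1n.
by rewrite sumr_const card_ord ((pcharf0P k).1 k_char0) -lt0n ltnW.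
Qed.

Lemma additive_character_exists (F : finFieldType) (k : closedFieldType) :
  [pchar k] =i pred0 ->
  exists psi : F -> k,
    [/\ {morph psi : x y / x + y >-> x * y}, psi 0 = 1 & exists x0, psi x0 != 1].
Proof.
move=> k_char0; have [p p_pr pcharFp] := finPcharP F.
have [z zp z_neq1] := nontrivial_root_of_unity k_char0 (prime_gt1 p_pr).
have [f f_lin [g fK gK]] := pprimeChar_vectAxiom pcharFp.
have fD : {morph f : x y / x + y} by move=> x y; rewrite -[x in LHS]scale1r f_lin scale1r.
have f0 : f 0 = 0 by apply: (addrI (f 0)); rewrite -fD !addr0.
have [i] : exists i, f 1 0 i != f 0 0 i.
  apply/existsP; apply: contraR (oner_neq0 F) => /existsPn f10.
  rewrite -[1]fK -[0]fK; apply/eqP; congr g; apply/matrixP => ? j.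
  by rewrite ord1; apply/eqP/negPn/f10.
move=> _; exists (fun x => z ^+ f x 0 i); split.
- have z_modp a : z ^+ (a %% (Zp_trunc (pdiv p)).+2) = z ^+ a.
    by rewrite Fp_cast // expr_mod.
  by move=> x y /=; rewrite fD mxE /= z_modp exprD.
- by rewrite f0 mxE.
- by exists (g (delta_mx 0 i)); rewrite gK mxE !eqxx expr1.
Qed.

Lemma fibre_constant_factor (T U : finType) (h : T -> U) (R : Type) (r0 : R)
    (u : T -> R) :
  (forall x x', h x = h x' -> u x = u x') -> exists G : U -> R, forall x, G (h x) = u x.
Proof.
move=> u_h; exists (fun y => if [pick x | h x == y] is Some x then u x else r0) => x.
by case: pickP => [x' /eqP/u_h // | /(_ x)]; rewrite eqxx.
Qed.

Section Balanced.
Variables (F : fieldType) (R : Type) (p q : nat) (Om : 'M[F]_(p,q) -> 'M[F]_(p,q) -> R).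
Hypothesis OmM : forall X eta (b : 'M[F]_q), Om (X *m b) eta = Om X (eta *m b^T).

(* [b] projects onto the row space of [X], so [X b = X] and [eta b^T] only
   depends on [eta X^T]. *)
Lemma balanced_eq_same X eta eta' : eta *m X^T = eta' *m X^T -> Om X eta = Om X eta'.
Proof.
move=> e; pose b := pinvmx X *m X.
have Xb : X *m b = X by rewrite /b mulmxA mulmxKpV.
by rewrite -Xb !OmM /b trmx_mul !mulmxA e.
Qed.

Lemma balanced_eq_sub X0 eta0 X eta :
  (X0^T <= X^T)%MS -> eta0 *m X0^T = eta *m X^T -> Om X0 eta0 = Om X eta.
Proof.
move=> sX0X e; pose b := (X0^T *m pinvmx X^T)^T.
have Xb : X *m b = X0 by apply: trmx_inj; rewrite trmx_mul /b trmxK mulmxKpV.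
by rewrite -Xb OmM; apply: balanced_eq_same; rewrite -mulmxA -trmx_mul Xb.
Qed.

(* [X0^T] has its row space inside those of [X^T] and [X'^T], and
   [eta X0^T = eta X^T]. *)
Lemma balanced_eq X eta X' eta' : eta *m X^T = eta' *m X'^T -> Om X eta = Om X' eta'.
Proof.
move=> e; pose X0 := (pinvmx eta *m (eta *m X^T))^T.
have e0 : eta *m X0^T = eta *m X^T.
  by rewrite /X0 trmxK mulmxA (mulmxA (eta *m _)) mulmxKpV.
have sX0X : (X0^T <= X^T)%MS by rewrite /X0 trmxK mulmxA submxMl.
have sX0X' : (X0^T <= X'^T)%MS by rewrite /X0 trmxK e mulmxA submxMl.
by rewrite -(balanced_eq_sub sX0X e0); apply: balanced_eq_sub; rewrite ?e0.
Qed.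

End Balanced.

Lemma lbalanced_eq (F : fieldType) (R : Type) (p q : nat)
    (Om : 'M[F]_(p,q) -> 'M[F]_(p,q) -> R) :
  (forall (a : 'M[F]_p) X eta, Om (a *m X) eta = Om X (a^T *m eta)) ->
  forall X eta X' eta', X^T *m eta = X'^T *m eta' -> Om X eta = Om X' eta'.
Proof.
move=> OmM X eta X' eta' e; pose Om' (Y zeta : 'M[F]_(q,p)) := Om Y^T zeta^T.
have Om'M Y zeta b : Om' (Y *m b) zeta = Om' Y (zeta *m b^T).
  by rewrite /Om' !trmx_mul OmM trmxK.
rewrite -[X]trmxK -[X']trmxK -[eta]trmxK -[eta']trmxK.
by apply: (balanced_eq Om'M); apply: trmx_inj; rewrite !trmx_mul !trmxK.
Qed.

Section TracePairing.
Variable F : fieldType.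

Definition mxdot p q (X Z : 'M[F]_(p,q)) : F := \tr (X *m Z^T).

Lemma mxdotC p q (X Z : 'M[F]_(p,q)) : mxdot X Z = mxdot Z X.
Proof. by rewrite /mxdot -mxtrace_tr trmx_mul trmxK. Qed.

Lemma mxdotDl p q (X Y Z : 'M[F]_(p,q)) : mxdot (X + Y) Z = mxdot X Z + mxdot Y Z.
Proof. by rewrite /mxdot mulmxDl mxtraceD. Qed.

Lemma mxdotBr p q (X Y Z : 'M[F]_(p,q)) : mxdot X (Y - Z) = mxdot X Y - mxdot X Z.
Proof. by rewrite /mxdot linearB /= mulmxBr raddfB. Qed.

Lemma mxdotZl p q c (X Z : 'M[F]_(p,q)) : mxdot (c *: X) Z = c * mxdot X Z.
Proof. by rewrite /mxdot -scalemxAl mxtraceZ. Qed.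

Lemma mxdot0r p q (X : 'M[F]_(p,q)) : mxdot X 0 = 0.
Proof. by rewrite /mxdot trmx0 mulmx0 mxtrace0. Qed.

Lemma mxdotMr p r q (A : 'M[F]_(p,r)) (B : 'M[F]_(r,q)) Z :
  mxdot (A *m B) Z = mxdot A (Z *m B^T).
Proof. by rewrite /mxdot trmx_mul trmxK mulmxA. Qed.

Lemma mxdotMl p r q (A : 'M[F]_(p,r)) (B : 'M[F]_(r,q)) Z :
  mxdot (A *m B) Z = mxdot B (A^T *m Z).
Proof. by rewrite /mxdot trmx_mul trmxK -mulmxA mxtrace_mulC mulmxA. Qed.

Lemma mxdot_delta p q (i : 'I_p) (j : 'I_q) (Z : 'M[F]_(p,q)) :
  mxdot (delta_mx i j) Z = Z i j.
Proof.
rewrite /mxdot /mxtrace (bigD1 i) //= big1 ?addr0 => [|l nl].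
  rewrite mxE (bigD1 j) //= big1 ?addr0 => [|t nt]; first by rewrite !mxE !eqxx mul1r.
  by rewrite !mxE eqxx (negbTE nt) mul0r.
by rewrite mxE big1 // => t _; rewrite !mxE (negbTE nl) mul0r.
Qed.

End TracePairing.

Section Fourier.
Variables (F : finFieldType) (k : fieldType) (psi : F -> k).
Hypothesis psiD : {morph psi : x y / x + y >-> x * y}.
Hypothesis psi0 : psi 0 = 1.
Variable x0 : F.
Hypothesis psi_x0 : psi x0 != 1.
Hypothesis k_char0 : [pchar k] =i pred0.
Variables p q : nat.
Local Notation N := #|{: 'M[F]_(p,q)}|.

Definition fourier (v : 'M[F]_(p,q) -> k) (eta : 'M[F]_(p,q)) : k :=
  \sum_Y v Y * psi (mxdot Y eta).

Lemma card_mx_neq0 : N%:R != 0 :> k.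
Proof. by rewrite ((pcharf0P k).1 k_char0) -lt0n; apply/card_gt0P; exists 0. Qed.

(* Translating by a multiple of a matrix unit at a nonzero entry of [Z] scales
   the sum by [psi x0]. *)
Lemma sum_psi_mxdot (Z : 'M[F]_(p,q)) :
  \sum_X psi (mxdot X Z) = if Z == 0 then N%:R else 0.
Proof.
case: eqP => [-> | /eqP Z_neq0].
  by under eq_bigr do rewrite mxdot0r psi0; rewrite sumr_const.
have /existsP [i /existsP [j Zij]] : [exists i, exists j, Z i j != 0].
  apply: contraR Z_neq0 => /existsPn Z0; apply/eqP/matrixP => i j.
  by rewrite mxE; apply/eqP/negPn; move: j; apply/existsPn/Z0.
set S := \sum_X _; pose X1 := (x0 / Z i j) *: delta_mx i j.
have S_eq : S = psi x0 * S.
  rewrite {1}/S (reindex_inj (addrI X1)) /= mulr_sumr; apply: eq_bigr => X _.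
  by rewrite mxdotDl psiD mxdotZl mxdot_delta divfK.
have : (1 - psi x0) * S = 0 by rewrite mulrBl mul1r -S_eq subrr.
by move/eqP; rewrite mulf_eq0 subr_eq0 eq_sym (negbTE psi_x0) => /eqP.
Qed.

Lemma sum_psi_mxdot_sub (A B : 'M[F]_(p,q)) :
  \sum_X psi (mxdot X A) * psi (- mxdot X B) = (A == B)%:R * N%:R.
Proof.
under eq_bigr do rewrite -psiD -mxdotBr.
by rewrite sum_psi_mxdot subr_eq0; case: eqP; rewrite ?mul1r ?mul0r.
Qed.

Lemma fourier_inj (v w : 'M[F]_(p,q) -> k) : fourier v =1 fourier w -> v =1 w.
Proof.
have transform_twice (u : 'M[F]_(p,q) -> k) Y0 :
    \sum_eta fourier u eta * psi (- mxdot Y0 eta) = N%:R * u Y0.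
  under eq_bigr do rewrite mulr_suml.
  rewrite exchange_big /=.
  under eq_bigr => Y _.
    under eq_bigr do rewrite -mulrA (mxdotC Y) (mxdotC Y0).
    rewrite -mulr_sumr sum_psi_mxdot_sub.
    over.
  rewrite (bigD1 Y0) //= eqxx mul1r big1 ?addr0 1?mulrC // => Y /negbTE ->.
  by rewrite mul0r mulr0.
move=> vw Y; apply: (mulfI card_mx_neq0); rewrite -!transform_twice.
by apply: eq_bigr => eta _; rewrite vw.
Qed.

Lemma fourier_surj (g : 'M[F]_(p,q) -> k) :
  exists f : {ffun 'M[F]_(p,q) -> k}, fourier f =1 g.
Proof.
exists [ffun a => N%:R^-1 * \sum_xi g xi * psi (- mxdot a xi)] => zeta.
rewrite /fourier; under eq_bigr do rewrite ffunE -mulrA mulr_suml.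
rewrite -mulr_sumr exchange_big /=.
under eq_bigr => xi _.
  under eq_bigr do rewrite mulrC mulrCA.
  rewrite -mulr_sumr sum_psi_mxdot_sub.
  over.
rewrite (bigD1 zeta) //= eqxx mul1r big1 ?addr0 => [|xi /negbTE]; last first.
  by rewrite eq_sym => ->; rewrite mul0r mulr0.
by rewrite mulrCA mulVf ?mulr1 ?card_mx_neq0.
Qed.

End Fourier.

Definition dirac (R : pzSemiRingType) (T : finType) (x : T) : {ffun T -> R} :=
  [ffun y => (x == y)%:R].

Section Indicators.
Variables (R : pzSemiRingType) (T : finType).

Lemma sumr_cond (P : pred T) (u : T -> R) : \sum_(x | P x) u x = \sum_x u x * (P x)%:R.
Proof. by rewrite big_mkcond; apply: eq_bigr => x _; rewrite mulr_natr mulrb. Qed.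

Lemma sum_mul_dirac (u : T -> R) y : \sum_x u x * dirac R y x = u y.
Proof.
rewrite (bigD1 y) //= ffunE eqxx mulr1 big1 ?addr0 // => x x_neq_y.
by rewrite ffunE eq_sym (negbTE x_neq_y) mulr0.
Qed.

Lemma sum_pushforward (U : finType) (h : T -> U) (u : T -> R) (d : U -> R) :
  \sum_y (\sum_x u x * (h x == y)%:R) * d y = \sum_x u x * d (h x).
Proof.
under eq_bigr do rewrite mulr_suml.
rewrite exchange_big; apply: eq_bigr => x _.
rewrite (bigD1 (h x)) //= eqxx mulr1 big1 ?addr0 // => y y_neq_hx.
by rewrite eq_sym (negbTE y_neq_hx) mulr0 mul0r.
Qed.

End Indicators.

Section Actions.
Variables (F : finFieldType) (k : fieldType) (n m : nat).
Local Notation V := {ffun 'M[F]_(n,m) -> k^o}.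
Implicit Types (f : {ffun 'M[F]_n -> k}) (g : {ffun 'M[F]_m -> k}) (v : V).
Implicit Types (a : 'M[F]_n) (b : 'M[F]_m) (X Y : 'M[F]_(n,m)).

Lemma lactE f v Y : lact f v Y = \sum_a \sum_X f a * v X * (a *m X == Y)%:R.
Proof. by rewrite ffunE; apply: eq_bigr => a _; rewrite [LHS]sumr_cond. Qed.

Lemma ractE v g Y : ract v g Y = \sum_X \sum_b v X * g b * (X *m b == Y)%:R.
Proof. by rewrite ffunE; apply: eq_bigr => X _; rewrite [LHS]sumr_cond. Qed.

Lemma lact_diracr f X Y : lact f (dirac k^o X) Y = \sum_a f a * (a *m X == Y)%:R.
Proof.
rewrite lactE; apply: eq_bigr => a _.
by under eq_bigr do rewrite mulrAC; rewrite sum_mul_dirac.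
Qed.

Lemma ract_diracr v b Y : ract v (dirac k b) Y = \sum_X v X * (X *m b == Y)%:R.
Proof.
rewrite ractE; apply: eq_bigr => X _.
by under eq_bigr do rewrite mulrAC; rewrite sum_mul_dirac.
Qed.

Lemma lact_diracl a v Y : lact (dirac k a) v Y = \sum_X v X * (a *m X == Y)%:R.
Proof.
rewrite lactE exchange_big; apply: eq_bigr => X _.
by under eq_bigr do rewrite [_ * v X]mulrC mulrAC; rewrite sum_mul_dirac.
Qed.

Lemma ract_diracl X g Y : ract (dirac k^o X) g Y = \sum_b g b * (X *m b == Y)%:R.
Proof.
rewrite ractE exchange_big; apply: eq_bigr => b _.
by under eq_bigr do rewrite [_ * g b]mulrC mulrAC; rewrite sum_mul_dirac.
Qed.

Lemma dirac_mulmxr X b : dirac k^o (X *m b) = ract (dirac k^o X) (dirac k b).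
Proof.
apply/ffunP => Y; rewrite ract_diracr.
by under eq_bigr do rewrite mulrC; rewrite sum_mul_dirac ffunE.
Qed.

Lemma dirac_mulmxl a X : dirac k^o (a *m X) = lact (dirac k a) (dirac k^o X).
Proof.
apply/ffunP => Y; rewrite lact_diracl.
by under eq_bigr do rewrite mulrC; rewrite sum_mul_dirac ffunE.
Qed.

Lemma dirac_expand v : v = \sum_X v X *: dirac k^o X.
Proof.
apply/ffunP => Y; rewrite sum_ffunE -[LHS]sum_mul_dirac.
by apply: eq_bigr => X _; rewrite !ffunE eq_sym.
Qed.

Lemma linear_dirac_expand (T : {linear V -> V}) v : T v = \sum_X v X *: T (dirac k^o X).
Proof.
by rewrite {1}(dirac_expand v) linear_sum; apply: eq_bigr => X _; rewrite linearZ.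
Qed.

Lemma lact_dirac_expand f v : lact f v = \sum_X v X *: lact f (dirac k^o X).
Proof.
apply/ffunP => Y; rewrite sum_ffunE lactE exchange_big.
apply: eq_bigr => X _; rewrite ffunE lact_diracr [RHS]mulr_sumr.
by apply: eq_bigr => a _; rewrite mulrCA mulrA.
Qed.

Lemma ract_dirac_expand v g : ract v g = \sum_X v X *: ract (dirac k^o X) g.
Proof.
apply/ffunP => Y; rewrite sum_ffunE ractE.
apply: eq_bigr => X _; rewrite ffunE ract_diracl [RHS]mulr_sumr.
by apply: eq_bigr => b _; rewrite mulrA.
Qed.

Lemma lact_ract_comm f v g : lact f (ract v g) = ract (lact f v) g.
Proof.
apply/ffunP => Y; rewrite lactE ractE [RHS]exchange_big /=.
have -> : \sum_a \sum_Z f a * ract v g Z * (a *m Z == Y)%:R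
        = \sum_a \sum_X \sum_b f a * v X * g b * (a *m X *m b == Y)%:R.
  apply: eq_bigr => a _.
  under eq_bigr do rewrite mulrAC mulrC ractE pair_bigA.
  rewrite sum_pushforward [RHS]pair_bigA; apply: eq_bigr => -[X b] _.
  by rewrite /= mulrCA !mulrA mulmxA.
rewrite [LHS]pair_bigA [LHS]exchange_big; apply: eq_bigr => b _.
under [RHS]eq_bigr do rewrite -mulrA lactE pair_bigA.
by rewrite sum_pushforward; apply: eq_bigr => -[a X] _; rewrite !mulrA.
Qed.

End Actions.

Section Centralizers.
Variables (F : finFieldType) (k : fieldType) (psi : F -> k).
Hypothesis psiD : {morph psi : x y / x + y >-> x * y}.
Hypothesis psi0 : psi 0 = 1.
Variable x0 : F.
Hypothesis psi_x0 : psi x0 != 1.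
Hypothesis k_char0 : [pchar k] =i pred0.
Variables n m : nat.
Local Notation V := {ffun 'M[F]_(n,m) -> k^o}.
Implicit Types (f : {ffun 'M[F]_n -> k}) (g : {ffun 'M[F]_m -> k}) (v : V).
Implicit Types (a : 'M[F]_n) (b : 'M[F]_m) (X eta : 'M[F]_(n,m)).

Lemma fourier_lact_diracr f X eta :
  fourier psi (lact f (dirac k^o X)) eta = fourier psi f (eta *m X^T).
Proof.
rewrite /fourier; under eq_bigr do rewrite lact_diracr.
by rewrite sum_pushforward; apply: eq_bigr => a _; rewrite mxdotMr.
Qed.

Lemma fourier_ract_diracl X g eta :
  fourier psi (ract (dirac k^o X) g) eta = fourier psi g (X^T *m eta).
Proof.
rewrite /fourier; under eq_bigr do rewrite ract_diracl.
by rewrite sum_pushforward; apply: eq_bigr => b _; rewrite mxdotMl.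
Qed.

Lemma fourier_ract_diracr v b eta :
  fourier psi (ract v (dirac k b)) eta = fourier psi v (eta *m b^T).
Proof.
rewrite /fourier; under eq_bigr do rewrite ract_diracr.
by rewrite sum_pushforward; apply: eq_bigr => X _; rewrite mxdotMr.
Qed.

Lemma fourier_lact_diracl a v eta :
  fourier psi (lact (dirac k a) v) eta = fourier psi v (a^T *m eta).
Proof.
rewrite /fourier; under eq_bigr do rewrite lact_diracl.
by rewrite sum_pushforward; apply: eq_bigr => X _; rewrite mxdotMl.
Qed.

Lemma lact_of_commute_ract (T : {linear V -> V}) :
  (forall g v, T (ract v g) = ract (T v) g) -> exists f, forall v, T v = lact f v.
Proof.
move=> TC; pose Om X eta := fourier psi (T (dirac k^o X)) eta.
have OmM X eta b : Om (X *m b) eta = Om X (eta *m b^T).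
  by rewrite /Om dirac_mulmxr TC fourier_ract_diracr.
have [G GE] : exists G : 'M[F]_n -> k, forall X eta, G (eta *m X^T) = Om X eta.
  have [G GE] := @fibre_constant_factor _ _ (fun p : _ * _ => p.2 *m p.1^T) _ 0
    (fun p => Om p.1 p.2) (fun p p' e => balanced_eq OmM e).
  by exists G => X eta; apply: (GE (X, eta)).
have [f fourier_f] := fourier_surj psiD psi0 psi_x0 k_char0 G.
exists f => v; rewrite linear_dirac_expand lact_dirac_expand.
apply: eq_bigr => X _; congr (_ *: _); apply/ffunP.
apply: (fourier_inj psiD psi0 psi_x0 k_char0) => eta.
by rewrite fourier_lact_diracr fourier_f GE.
Qed.

Lemma ract_of_commute_lact (T : {linear V -> V}) :
  (forall f v, T (lact f v) = lact f (T v)) -> exists g, forall v, T v = ract v g.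
Proof.
move=> TC; pose Om X eta := fourier psi (T (dirac k^o X)) eta.
have OmM a X eta : Om (a *m X) eta = Om X (a^T *m eta).
  by rewrite /Om dirac_mulmxl TC fourier_lact_diracl.
have [G GE] : exists G : 'M[F]_m -> k, forall X eta, G (X^T *m eta) = Om X eta.
  have [G GE] := @fibre_constant_factor _ _ (fun p : _ * _ => p.1^T *m p.2) _ 0
    (fun p => Om p.1 p.2) (fun p p' e => lbalanced_eq OmM e).
  by exists G => X eta; apply: (GE (X, eta)).
have [g fourier_g] := fourier_surj psiD psi0 psi_x0 k_char0 G.
exists g => v; rewrite linear_dirac_expand ract_dirac_expand.
apply: eq_bigr => X _; congr (_ *: _); apply/ffunP.
apply: (fourier_inj psiD psi0 psi_x0 k_char0) => eta.
by rewrite fourier_ract_diracl fourier_g GE.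
Qed.

End Centralizers.

Theorem theorem6p1 (F : finFieldType) (k : closedFieldType)
  (char0 : [pchar k] =i pred0) (n m : nat) :
  (forall T : {linear {ffun 'M[F]_(n,m) -> k^o} -> {ffun 'M[F]_(n,m) -> k^o}},
     (exists f : {ffun 'M[F]_n -> k}, forall v, T v = lact f v) <->
     (forall (g : {ffun 'M[F]_m -> k}) v, T (ract v g) = ract (T v) g)) /\
  (forall T : {linear {ffun 'M[F]_(n,m) -> k^o} -> {ffun 'M[F]_(n,m) -> k^o}},
     (exists g : {ffun 'M[F]_m -> k}, forall v, T v = ract v g) <->
     (forall (f : {ffun 'M[F]_n -> k}) v, T (lact f v) = lact f (T v))).
Proof.
have [psi [psiD psi0 [x0 psi_x0]]] := additive_character_exists F char0.
split=> T; split.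
- by move=> [f Tf] g v; rewrite !Tf lact_ract_comm.
- exact: (lact_of_commute_ract psiD psi0 psi_x0 char0 (T := T)).
- by move=> [g Tg] f v; rewrite !Tg lact_ract_comm.
- exact: (ract_of_commute_lact psiD psi0 psi_x0 char0 (T := T)).
Qed.
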